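(* Let $K$ be a field which is not absolutely algebraic. Then $K$ has a maximal subring which is integrally closed in $K$ and is a conch subring of $K$.
   Context: All rings are commutative with $1\neq0$ and subrings are unital. A field is absolutely algebraic if it is algebraic over $\mathbb{F}_p$ for some prime $p$. A maximal subring is a proper subring maximal with respect to inclusion among proper subrings. For a unit $x\in K$, a subring $V$ is a conch subring conching $x$ if $x^{-1}\in V$, $x\notin V$ and $V$ is maximal among subrings containing $x^{-1}$ but not $x$. *)

From HB Require Import structures.
From mathcomp Require Import all_boot all_order all_algebra.
Set Implicit Arguments. Unset Strict Implicit. Unset Printing Implicit Defensive.
Import Order.TTheory GRing.Theory Num.Theory.
Local Open Scope ring_scope.

Definition is_subring (K : fieldType) (S : K -> Prop) : Prop :=
  S 1 /\ (forall x y, S x -> S y -> S (x - y)) /\ (forall x y, S x -> S y -> S (x * y)).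

Definition proper_in (K : fieldType) (S : K -> Prop) : Prop := exists x : K, ~ S x.

Definition maximal_subring (K : fieldType) (V : K -> Prop) : Prop :=
  [/\ is_subring V, proper_in V &
      forall W : K -> Prop, is_subring W -> proper_in W ->
        (forall y, V y -> W y) -> forall y, W y -> V y].

Definition integrally_closed_in (K : fieldType) (V : K -> Prop) : Prop :=
  forall x : K, (exists q : {poly K}, [/\ q \is monic, forall i, V q`_i & root q x]) -> V x.

Definition conches (K : fieldType) (V : K -> Prop) (x : K) : Prop :=
  [/\ x != 0, is_subring V, V x^-1, ~ V x &
      forall W : K -> Prop, is_subring W -> W x^-1 -> ~ W x ->
        (forall y, V y -> W y) -> forall y, W y -> V y].

Definition conch_subring (K : fieldType) (V : K -> Prop) : Prop :=
  exists x : K, conches V x.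

(* K is algebraic over F_p for some prime p: K has characteristic p and every
   element is a root of a nonzero polynomial with coefficients in the prime
   subfield (the image of int in K). *)
Definition absolutely_algebraic (K : fieldType) : Prop :=
  exists p : nat, [/\ prime p, p \in [pchar K] &
    forall x : K, exists q : {poly K},
      [/\ q != 0, forall i, exists z : int, q`_i = z%:~R & root q x]].

(* Let s != 0 and let D be a subring with s in D, s^-1 not in D, K algebraic over D,
   and every nonzero element of D of the form s^k c (1 - s h) with c a unit of D and
   h in D.  By Zorn there is a subring V containing D and maximal for s^-1 not in V;
   it conches s^-1.  A conch subring is integrally closed and contains (1 - s a)^-1
   for every a in V.  So if y satisfies an equation over D with leading coefficient
   a = s^k c (1 - s h), then a y is integral over V, hence in V, and so is s^k y:
   V[s^-1] = K, which makes V a maximal subring.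
   Such s and D exist when K is not absolutely algebraic.  If K is algebraic over its
   prime ring, K has characteristic 0 and s = 2, D = Z work, as every nonzero integer
   is 2^k (1 - 2h).  Otherwise take t transcendental over Z, a subring F maximal with t
   transcendental over F (Zorn again), s = t and D = F[t]: F is a field, and every y
   is algebraic over F[t] because for y not in F, t is algebraic over F[y]. *)

From HB Require Import structures.
From mathcomp Require Import all_boot all_order all_algebra.
From mathcomp Require Import boolp classical_sets.
From mathcomp Require Import ring zify.
Set Implicit Arguments. Unset Strict Implicit. Unset Printing Implicit Defensive.
Import GRing.Theory.
Local Open Scope classical_set_scope.
Local Open Scope ring_scope.

Section SubringClosure.
Variables (K : fieldType) (S : set K).
Hypothesis hS : is_subring S.

Lemma subring1 : S 1. Proof. by case: hS. Qed.
Lemma subringB x y : S x -> S y -> S (x - y). Proof. by case: hS => _ [+ _]; apply. Qed.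
Lemma subringM x y : S x -> S y -> S (x * y). Proof. by case: hS => _ [_]; apply. Qed.

Lemma subring0 : S 0. Proof. by rewrite -(subrr 1); apply: subringB subring1 subring1. Qed.

Lemma subringN x : S x -> S (- x).
Proof. by move=> Sx; rewrite -sub0r; apply: subringB subring0 Sx. Qed.

Lemma subringD x y : S x -> S y -> S (x + y).
Proof. by move=> Sx Sy; rewrite -[y]opprK; apply: subringB Sx (subringN Sy). Qed.

Lemma subringX x n : S x -> S (x ^+ n).
Proof.
move=> Sx; elim: n => [|n IH]; first by rewrite expr0; apply: subring1.
by rewrite exprS; apply: subringM.
Qed.

Lemma subring_sum I (r : seq I) (P : pred I) (F : I -> K) :
  (forall i, P i -> S (F i)) -> S (\sum_(i <- r | P i) F i).
Proof. by move=> SF; apply: big_ind => //; [apply: subring0 | apply: subringD]. Qed.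

End SubringClosure.

Section Adjoin.
Variable K : fieldType.
Implicit Types (S W : set K) (p q : {poly K}).

Definition poly_over S p := forall i, S p`_i.

Definition adjoin S (y : K) : set K := fun z => exists2 p, poly_over S p & z = p.[y].

Definition algebraic_over S (y : K) := exists q, [/\ q != 0, poly_over S q & root q y].

Definition transcendental_over S (y : K) := ~ algebraic_over S y.

Definition integral_over S (y : K) := exists q, [/\ q \is monic, poly_over S q & root q y].

Lemma transcendental_root S y q : transcendental_over S y -> poly_over S q -> root q y -> q = 0.
Proof. by move=> Ty Sq qy; have [//|q0] := eqVneq q 0; case: Ty; exists q. Qed.

Lemma poly_over_mem S p c : poly_over S p -> c \in (p : seq K) -> S c.
Proof. by move=> Sp /(nthP 0)[i _ <-]. Qed.

Section PolyOver.
Variable S : set K.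
Hypothesis hS : is_subring S.

Lemma poly_overC c : S c -> poly_over S c%:P.
Proof. by move=> Sc i; rewrite coefC; case: eqP => _ //; apply: subring0. Qed.

Lemma poly_overX : poly_over S 'X.
Proof. by move=> i; rewrite coefX; case: eqP => _; [apply: subring1 | apply: subring0]. Qed.

Lemma poly_overB p q : poly_over S p -> poly_over S q -> poly_over S (p - q).
Proof. by move=> Sp Sq i; rewrite coefB; apply: subringB. Qed.

Lemma poly_overM p q : poly_over S p -> poly_over S q -> poly_over S (p * q).
Proof.
by move=> Sp Sq i; rewrite coefM; apply: subring_sum => // j _; apply: subringM.
Qed.

Lemma poly_over_seq p : (forall c, c \in (p : seq K) -> S c) -> poly_over S p.
Proof.
move=> Sp i; have [ip|pi] := ltnP i (size p); first by apply/Sp/mem_nth.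
by rewrite nth_default //; apply: subring0.
Qed.

Lemma adjoin_subring y : is_subring (adjoin S y).
Proof.
split; [|split].
- by exists 1; [apply: poly_overC (subring1 hS) | rewrite hornerC].
- move=> _ _ [p Sp ->] [q Sq ->]; exists (p - q); first exact: poly_overB.
  by rewrite hornerD hornerN.
- move=> _ _ [p Sp ->] [q Sq ->]; exists (p * q); first exact: poly_overM.
  by rewrite hornerM.
Qed.

Lemma adjoin_sub y : S `<=` adjoin S y.
Proof. by move=> z Sz; exists z%:P; [apply: poly_overC | rewrite hornerC]. Qed.

Lemma adjoin_mem y : adjoin S y y.
Proof. by exists 'X; [apply: poly_overX | rewrite hornerX]. Qed.

Lemma adjoin_min W y : is_subring W -> S `<=` W -> W y -> adjoin S y `<=` W.
Proof.
move=> hW SW Wy _ [p Sp ->]; rewrite horner_coef.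
by apply: (subring_sum hW) => i _; apply: (subringM hW); [apply: SW | apply: subringX].
Qed.

Lemma adjoinV_denom u : S u -> u != 0 ->
  adjoin S u^-1 `<=` [set w | exists k, S (w * u ^+ k)].
Proof.
move=> Su u0; apply: adjoin_min => [|z Sz|]; last 2 first.
- by exists 0%N; rewrite mulr1.
- by exists 1%N; rewrite mulVf //; apply: subring1.
split; [|split].
- by exists 0%N; rewrite mulr1; apply: subring1.
- move=> a b [k Sa] [m Sb]; exists (k + m)%N.
  have -> : (a - b) * u ^+ (k + m) = a * u ^+ k * u ^+ m - b * u ^+ m * u ^+ k.
    by rewrite exprD; ring.
  by apply: (subringB hS); apply: (subringM hS) => //; apply: subringX.
- move=> a b [k Sa] [m Sb]; exists (k + m)%N.
  by rewrite exprD mulrACA; apply: (subringM hS).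
Qed.

Lemma poly_over_adjoinV_denom u q : S u -> u != 0 ->
  poly_over (adjoin S u^-1) q -> exists k, poly_over S (u ^+ k *: q).
Proof.
move=> Su u0 Sq.
have /choice[k Sk] : forall i : 'I_(size q), exists k, S (q`_i * u ^+ k).
  by move=> i; apply: adjoinV_denom.
exists (\max_i k i) => i; rewrite coefZ mulrC.
have [iq|qi] := ltnP i (size q); last by rewrite nth_default ?mul0r //; apply: subring0.
have /subnK <- := @leq_bigmax _ k (Ordinal iq).
by rewrite exprD mulrCA; apply: (subringM hS); [apply: subringX | exact: (Sk (Ordinal iq))].
Qed.

End PolyOver.
End Adjoin.

Lemma Zorn_bigcup_nonempty (T : Type) (P : set (set T)) (A0 : set T) : P A0 ->
  (forall C, C `<=` P -> total_on C subset -> C !=set0 -> P (\bigcup_(A in C) A)) ->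
  exists2 M, P M & forall A, P A -> M `<=` A -> A `<=` M.
Proof.
move=> PA0 Pch; pose R (A B : {A | P A}) := `[< sval A `<=` sval B >].
have [[M PM] Mmax] : exists M, premaximal R M.
  apply: (ZL_preorder (exist _ A0 PA0)) => [A|A B D /asboolP AB /asboolP BD|C Ctot].
  - exact/asboolP.
  - exact/asboolP/(subset_trans AB BD).
  have [[[A PA] CA]|C0] := pselect (C !=set0); last first.
    by exists (exist _ A0 PA0) => A CA; case: C0; exists A.
  have PU : P (\bigcup_(B in sval @` C) B).
    apply: Pch; first by move=> _ [[B PB] _ <-].
      move=> _ _ [B CB <-] [B' CB' <-].
      by have [/asboolP|/asboolP] := Ctot _ _ CB CB'; [left | right].
    by exists A, (exist _ A PA).
  exists (exist _ _ PU) => B CB; apply/asboolP => x Bx.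
  by exists (sval B) => //; exists B.
by exists M => // A PA MA; apply/asboolP/(Mmax (exist _ A PA)); apply/asboolP.
Qed.

Section Chains.
Variables (T : eqType) (C : set (set T)).
Hypotheses (Ctot : total_on C subset) (Cne : C !=set0).

Lemma bigcup_chain_seq (s : seq T) :
  (forall x, x \in s -> (\bigcup_(A in C) A) x) -> exists2 A, C A & forall x, x \in s -> A x.
Proof.
case: Cne => A0 CA0; elim: s => [|y s IH] sC; first by exists A0.
have [A CA sA] : exists2 A, C A & forall x, x \in s -> A x.
  by apply: IH => x xs; apply: sC; rewrite inE xs orbT.
have [B CB By] := sC y (mem_head y s).
have [AB|BA] := Ctot CA CB.
- by exists B => // x; rewrite inE => /predU1P[->//|/sA]; apply: AB.
- by exists A => // x; rewrite inE => /predU1P[->|/sA//]; apply: BA.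
Qed.

End Chains.

Section SubringChains.
Variables (K : fieldType) (C : set (set K)).
Hypotheses (Csub : C `<=` @is_subring K) (Ctot : total_on C subset) (Cne : C !=set0).

Lemma bigcup_chain_subring : is_subring (\bigcup_(A in C) A).
Proof.
have pair a b : (\bigcup_(A in C) A) a -> (\bigcup_(A in C) A) b ->
    exists2 A, C A & A a /\ A b.
  move=> Ua Ub; have [|A CA sA] := bigcup_chain_seq Ctot Cne (s := [:: a; b]).
    by move=> x; rewrite !inE => /orP[]/eqP->.
  by exists A => //; split; apply: sA; rewrite !inE eqxx ?orbT.
case: Cne => A0 CA0; split; [|split].
- by exists A0 => //; exact: subring1 (Csub CA0).
- move=> a b Ua Ub; have [A CA [Aa Ab]] := pair a b Ua Ub.
  by exists A => //; apply: (subringB (Csub CA)).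
- move=> a b Ua Ub; have [A CA [Aa Ab]] := pair a b Ua Ub.
  by exists A => //; apply: (subringM (Csub CA)).
Qed.

Lemma poly_over_bigcup_chain q :
  poly_over (\bigcup_(A in C) A) q -> exists2 A, C A & poly_over A q.
Proof.
move=> Cq; have [|A CA qA] := bigcup_chain_seq Ctot Cne (s := q).
  by move=> c; apply: poly_over_mem.
by exists A => //; exact: (poly_over_seq (Csub CA) qA).
Qed.

End SubringChains.

Section IntegralOver.
Variables (K : fieldType) (V : set K).
Hypothesis hV : is_subring V.

Definition subring_pred : pred K := fun x => `[< V x >].

Fact subring_pred_closed : subring_closed subring_pred.
Proof.
split=> [|x y /asboolP Vx /asboolP Vy|x y /asboolP Vx /asboolP Vy]; apply/asboolP.
- exact: subring1.
- exact: subringB.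
- exact: subringM.
Qed.

HB.instance Definition _ := GRing.isSubringClosed.Build K subring_pred subring_pred_closed.

(* [V] as a ring in its own right, to use the integral closure theory of [mxpoly]. *)
Record subring_type := SubringElt { subring_val :> K; _ : subring_val \in subring_pred }.
HB.instance Definition _ := [isSub for subring_val].
HB.instance Definition _ := [Choice of subring_type by <:].
HB.instance Definition _ := [SubChoice_isSubComNzRing of subring_type by <:].

Definition subring_incl : {rmorphism subring_type -> K} := val.

Lemma integral_over_horner z q :
  integral_over V z -> poly_over V q -> integral_over V q.[z].
Proof.
move=> [p [mp Vp pz]] Vq.
have intV c : V c -> integralOver subring_incl c.
  move=> Vc; have Pc : c \in subring_pred by apply/asboolP.
  by rewrite -[c]/(subring_incl (SubringElt Pc)); apply: integral_id.
have [r mr rqz] := integral_horner_root mp pz (fun c cp => intV c (poly_over_mem Vp cp))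
  (fun c cq => intV c (poly_over_mem Vq cq)).
exists (map_poly subring_incl r); split=> [|i|//]; first exact: monic_map.
by rewrite coef_map; case: (r`_i) => c Pc; apply/asboolP.
Qed.

Lemma integral_over_inv_mem x : x != 0 -> V x^-1 -> integral_over V x -> V x.
Proof.
move=> x0 Vx' [q [mq Vq /[dup] qx /rootP]].
have := root_size_gt1 (monic_neq0 mq) qx; case szq: (size q) => [|[|n]] // _.
have lq : q`_n.+1 = 1 by rewrite -(monicP mq) lead_coefE szq.
rewrite horner_coef szq big_ord_recr /= lq mul1r => qx0.
have -> : x = - \sum_(i < n.+1) q`_i * x^-1 ^+ (n - i).
  apply: (mulIf (expf_neq0 n x0)); rewrite -exprS mulNr mulr_suml.
  transitivity (- \sum_(i < n.+1) q`_i * x ^+ i); first by apply/eqP; rewrite -addr_eq0 addrC qx0.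
  congr (- _); apply: eq_bigr => i _; rewrite -mulrA; congr (_ * _).
  have le_in : (i <= n)%N by rewrite -ltnS.
  by rewrite -[in x ^+ n](subnK le_in) exprD mulrA -exprMn mulVf // expr1n mul1r.
apply: (subringN hV); apply: (subring_sum hV) => i _.
by apply: (subringM hV) => //; apply: subringX.
Qed.

Lemma integral_over_lead_coef_mul q y : poly_over V q -> q != 0 -> root q y ->
  integral_over V (lead_coef q * y).
Proof.
move=> Vq q0 qy; set a := lead_coef q.
have := root_size_gt1 q0 qy; case szq: (size q) => [|[|n]] // _.
have lq : q`_n.+1 = a by rewrite /a lead_coefE szq.
exists ('X^(n.+1) + \poly_(i < n.+1) (q`_i * a ^+ (n - i))); split.
- by rewrite monicE lead_coefDl ?lead_coefXn // size_polyXn ltnS size_poly.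
- move=> i; rewrite coefD coefXn coef_poly; apply: (subringD hV).
    by case: eqP => _; [apply: subring1 | apply: subring0].
  case: ifP => _; last exact: subring0.
  by rewrite -lq; apply: (subringM hV (Vq i)); apply: subringX.
apply/rootP; rewrite hornerD hornerXn horner_poly.
transitivity (a ^+ n * q.[y]); last by rewrite (rootP qy) mulr0.
rewrite horner_coef szq [in RHS]big_ord_recr /= lq mulrDr addrC mulr_sumr.
congr (_ + _); last by rewrite exprMn exprS; ring.
apply: eq_bigr => i _; have le_in : (i <= n)%N by rewrite -ltnS.
by rewrite -[in a ^+ n](subnK le_in) exprMn exprD; ring.
Qed.

End IntegralOver.

Section ConchSubring.
Variables (K : fieldType) (V : set K) (x : K).
Hypothesis conchV : conches V x.

Let x0 : x != 0. Proof. by case: conchV. Qed.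
Let hV : is_subring V. Proof. by case: conchV. Qed.
Let Vx' : V x^-1. Proof. by case: conchV. Qed.
Let nVx : ~ V x. Proof. by case: conchV. Qed.
Let Vmax : forall W, is_subring W -> W x^-1 -> ~ W x -> V `<=` W -> W `<=` V.
Proof. by case: conchV. Qed.

Lemma conches_adjoin y : ~ V y -> adjoin V y x.
Proof.
move=> nVy; apply: contrapT => nx; apply/nVy/(Vmax (adjoin_subring hV y)) => //.
- exact: adjoin_sub.
- exact: adjoin_sub.
- exact: adjoin_mem.
Qed.

Lemma conches_inv_1B a : V a -> V (1 - x^-1 * a)^-1.
Proof.
move=> Va; set u := 1 - x^-1 * a.
have Vu : V u by apply: (subringB hV); [apply: subring1 | apply: subringM].
have xu1 : x * (u - 1) = - a by rewrite /u addrAC subrr add0r mulrN mulVKf.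
have u0 : u != 0.
  by apply/eqP => u0; apply: nVx; move: xu1; rewrite u0 sub0r mulrN1 => /oppr_inj ->.
(* Otherwise x u^k is in V for some k, but x u^k = x modulo V. *)
apply: contrapT => nVu; have [k Vk] := adjoinV_denom hV Vu u0 (conches_adjoin nVu).
have xuk : x * u ^+ k = x - a * \sum_(i < k) u ^+ i.
  by rewrite -[u ^+ k](subrK 1) subrX1 mulrDr mulr1 mulrA xu1 mulNr addrC.
apply: nVx; rewrite -[x](subrK (a * \sum_(i < k) u ^+ i)) -xuk.
apply: (subringD hV Vk); apply: (subringM hV Va).
by apply: (subring_sum hV) => i _; apply: subringX.
Qed.

Lemma conches_integrally_closed : integrally_closed_in V.
Proof.
(* If z is not in V then x is in V[z], hence integral over V, and x^-1 in V gives x in V. *)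
move=> z intz; apply: contrapT => nVz; have [q Vq xqz] := conches_adjoin nVz.
have := integral_over_horner hV intz Vq; rewrite -xqz => intx.
exact/nVx/(integral_over_inv_mem hV x0 Vx' intx).
Qed.

Lemma conches_maximal : (forall y, adjoin V x y) -> maximal_subring V.
Proof.
move=> Vx_all; split => //; first by exists x.
move=> W hW [w nWw] VW; have [Wx|nWx] := pselect (W x); last exact: Vmax hW (VW _ Vx') nWx VW.
by case: (nWw (adjoin_min hW VW Wx (Vx_all w))).
Qed.

End ConchSubring.

Section ConchCriterion.
Variable K : fieldType.

Definition unit_decomposable (D : set K) (s : K) :=
  forall d, D d -> d != 0 ->
    exists k c h, [/\ D c, D c^-1, D h & d = s ^+ k * c * (1 - s * h)].

Lemma exists_conches_over (D : set K) x : is_subring D -> x != 0 -> D x^-1 -> ~ D x ->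
  exists2 V, D `<=` V & conches V x.
Proof.
move=> hD x0 Dx' nDx.
pose P := [set A : set K | [/\ is_subring A, D `<=` A & ~ A x]].
have [V [hV DV nVx] Vmax] : exists2 V, P V & forall A, P A -> V `<=` A -> A `<=` V.
  apply: (Zorn_bigcup_nonempty (A0 := D)); first by split.
  move=> C CP Ctot [A CA]; split.
  - by apply: bigcup_chain_subring => // [B /CP[]|]; last by exists A.
  - by move=> y Dy; exists A => //; case: (CP _ CA) => _ DA _; apply: DA.
  - by move=> [B CB Bx]; case: (CP _ CB) => _ _; apply.
exists V => //; split=> //; first exact: DV.
by move=> W hW _ nWx VW; apply: Vmax => //; split=> //; apply: subset_trans VW.
Qed.

Theorem exists_maximal_conch_subring (s : K) (D : set K) :
  s != 0 -> is_subring D -> D s -> ~ D s^-1 -> unit_decomposable D s ->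
  (forall y, algebraic_over D y) ->
  exists V : set K, [/\ maximal_subring V, integrally_closed_in V & conch_subring V].
Proof.
move=> s0 hD Ds nDs' Ddec Dalg.
have [V DV conchV] : exists2 V, D `<=` V & conches V s^-1.
  by apply: exists_conches_over; rewrite ?invr_neq0 ?invrK.
have hV : is_subring V by case: conchV.
have icV := conches_integrally_closed conchV.
have Vdenom y : exists k, V (s ^+ k * y).
  have [q [q0 Dq qy]] := Dalg y; have lq0 : lead_coef q != 0 by rewrite lead_coef_eq0.
  have [k [c [h [Dc Dc' Dh lq]]]] := Ddec (lead_coef q) (Dq _) lq0.
  move: lq0; rewrite lq !mulf_eq0 !negb_or => /andP[/andP[_ c0] u0].
  have Vu : V (1 - s * h)^-1.
    by have := conches_inv_1B conchV (DV _ Dh); rewrite invrK.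
  have Vay := icV _ (integral_over_lead_coef_mul hV (fun i => DV _ (Dq i)) q0 qy).
  exists k; have -> : s ^+ k * y = c^-1 * (1 - s * h)^-1 * (lead_coef q * y).
    by rewrite lq; field; rewrite c0 u0.
  by apply: (subringM hV) => //; apply: (subringM hV) => //; apply: DV.
exists V; split => //; last by exists s^-1.
apply: (conches_maximal conchV) => y; have [k Vk] := Vdenom y.
rewrite -[y](mulKf (expf_neq0 k s0)) -exprVn.
apply: (subringM (adjoin_subring hV s^-1)); last exact: adjoin_sub.
by apply: subringX; [apply: adjoin_subring | apply: adjoin_mem].
Qed.

End ConchCriterion.

Lemma int_two_adic (z : int) : z != 0 -> exists (k : nat) (h : int), z = 2 ^+ k * (1 - 2 * h).
Proof.
move=> z0; have [|m m_odd zm] := @pfactor_coprime 2 `|z|%N isT; first by rewrite absz_gt0.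
rewrite coprime2n in m_odd; set k := logn 2 _ in zm; set j := m./2 in zm.
exists k, (if z < 0 then j%:Z + 1 else - j%:Z).
rewrite [LHS]intEsign zm -(odd_double_half m) m_odd -/j PoszM.
have -> : ((2 ^ k)%N : int) = 2 ^+ k by rewrite -natz natrX.
by case: (z < 0); rewrite ?expr0 ?expr1 /=; nia.
Qed.

Section PrimeSubring.
Variable K : fieldType.

Definition int_subring : set K := fun y => exists z : int, y = z%:~R.

Lemma int_subring_subring : is_subring int_subring.
Proof.
split; [|split]; first by exists 1.
- by move=> _ _ [a ->] [b ->]; exists (a - b); rewrite intrB.
- by move=> _ _ [a ->] [b ->]; exists (a * b); rewrite intrM.
Qed.

Lemma int_subring_unit_decomposable : unit_decomposable int_subring 2.
Proof.
move=> _ [z ->]; have [->|/int_two_adic[k [h ->]] _] := eqVneq z 0; first by rewrite eqxx.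
exists k, 1, h%:~R; split; [by exists 1 | by rewrite invr1; exists 1 | by exists h |].
by rewrite mulr1 intrM intrB intrM rmorphXn.
Qed.

Lemma pchar0_intr_eq0 (z : int) : [pchar K] =i pred0 -> (z%:~R == 0 :> K) = (z == 0).
Proof. by move=> /pcharf0P K0; case: z => n; rewrite ?NegzE ?mulrNz ?oppr_eq0 K0. Qed.

End PrimeSubring.

Lemma maximal_conch_subring_pchar0 (K : fieldType) : [pchar K] =i pred0 ->
  (forall y : K, algebraic_over (@int_subring K) y) ->
  exists V : set K, [/\ maximal_subring V, integrally_closed_in V & conch_subring V].
Proof.
move=> K0 Kalg; have two0 : (2 : K) != 0 by rewrite (pcharf0P _).1.
apply: (exists_maximal_conch_subring (s := 2)) Kalg => //.
- exact: int_subring_subring.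
- by exists 2.
- move=> [z z2]; have : ((1 - 2 * z)%:~R : K) == 0.
    by rewrite intrB intrM -z2 mulfV // subrr.
  by rewrite pchar0_intr_eq0 //; lia.
exact: int_subring_unit_decomposable.
Qed.

Section Transcendence.
Variables (K : fieldType) (F : set K) (t : K).
Hypotheses (hF : is_subring F) (TF : transcendental_over F t).

Lemma algebraic_adjoin_swap y :
  algebraic_over (adjoin F y) t -> algebraic_over (adjoin F t) y.
Proof.
move=> [q [q0 Fyq qt]].
have /choice[f Ff] : forall i, exists f, poly_over F f /\ q`_i = f.[y].
  by move=> i; have [f Ff ->] := Fyq i; exists f.
(* q(t) = sum_i f_i(y) t^i = 0 is a bivariate relation over F between y and t; read
   as a polynomial in y, it has coefficients in F[t] and is nonzero as t is
   transcendental over F. *)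
pose Q : {poly {poly K}} := \poly_(i < size q) f i.
have FQ j : poly_over F (swapXY Q)`_j.
  move=> i; rewrite coef_swapXY coef_poly.
  by case: ltnP => _; [case: (Ff i) => + _; apply | rewrite coef0; apply: subring0].
have qQ : q = map_poly (horner_eval y) Q.
  apply/polyP => i; rewrite coef_map coef_poly /=.
  case: ltnP => [_|qi]; rewrite horner_evalE; first by case: (Ff i).
  by rewrite horner0 nth_default.
have Q0 : swapXY Q != 0.
  by rewrite swapXY_eq0; apply: contraNneq q0 => Q0; rewrite qQ Q0 map_poly0.
exists (map_poly (horner_eval t) (swapXY Q)); split.
- have Lt : ~~ root (lead_coef (swapXY Q)) t.
    by apply/negP => /(transcendental_root TF (FQ _))/eqP; rewrite lead_coef_eq0 (negbTE Q0).
  apply: contraNneq Lt => r0.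
  by rewrite /root lead_coefE -horner_evalE -coef_map r0 coef0.
- by move=> j; rewrite coef_map; exists (swapXY Q)`_j.
rewrite /root -horner_swapXY swapXYK -horner2_swapXY horner_swapXY -qQ.
exact: qt.
Qed.

End Transcendence.

Lemma take_poly1 (R : nzRingType) (p : {poly R}) : take_poly 1 p = (p`_0)%:P.
Proof. by apply/polyP => -[|i]; rewrite coef_take_poly coefC. Qed.

Lemma adjoin_unit_decomposable (K : fieldType) (F : set K) (t : K) : is_subring F ->
  (forall a, F a -> a != 0 -> F a^-1) -> unit_decomposable (adjoin F t) t.
Proof.
move=> hF Finv _ [g Fg ->] gt0.
have g0 : g != 0 by apply: contraNneq gt0 => ->; rewrite horner0.
have [m [q]] := multiplicity_XsubC g 0; rewrite g0 polyC0 subr0 /root horner_coef0 /=.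
set c := q`_0 => c0 gE.
have Fq : poly_over F q.
  by move=> i; have := Fg (i + m)%N; rewrite gE coefMXn ltnNge leq_addl addnK.
have qt : q.[t] = c + (drop_poly 1 q).[t] * t.
  by rewrite -{1}(poly_take_drop 1 q) take_poly1 expr1 hornerD hornerC hornerMX.
exists m, c, (- (c^-1 * (drop_poly 1 q).[t])); split.
- exact: adjoin_sub hF t _ (Fq 0%N).
- exact: adjoin_sub hF t _ (Finv _ (Fq 0%N) c0).
- apply: (subringN (adjoin_subring hF t)); apply: (subringM (adjoin_subring hF t)).
    exact: adjoin_sub hF t _ (Finv _ (Fq 0%N) c0).
  by exists (drop_poly 1 q) => // i; rewrite coef_drop_poly.
by rewrite gE hornerM hornerXn qt; field.
Qed.

Lemma exists_maximal_transcendental (K : fieldType) (F0 : set K) t :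
  is_subring F0 -> transcendental_over F0 t ->
  exists2 F, is_subring F /\ transcendental_over F t &
    forall W, is_subring W -> transcendental_over W t -> F `<=` W -> W `<=` F.
Proof.
move=> hF0 TF0; pose P := [set A | is_subring A /\ transcendental_over A t].
suff [F PF Fmax] : exists2 F, P F & forall A, P A -> F `<=` A -> A `<=` F.
  by exists F => // W hW TW; apply: Fmax.
apply: (Zorn_bigcup_nonempty (A0 := F0)) => // C CP Ctot Cne.
have Csub : C `<=` @is_subring K by move=> A /CP[].
split; first exact: bigcup_chain_subring.
move=> [q [q0 Cq qt]]; have [A CA Aq] := poly_over_bigcup_chain Csub Ctot Cne Cq.
by case: (CP _ CA) => _; apply; exists q.
Qed.

Section MaximalTranscendental.
Variables (K : fieldType) (F : set K) (t : K).
Hypotheses (hF : is_subring F) (TF : transcendental_over F t).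
Hypothesis Fmax : forall W, is_subring W -> transcendental_over W t -> F `<=` W -> W `<=` F.

Lemma maximal_transcendental_inv a : F a -> a != 0 -> F a^-1.
Proof.
move=> Fa a0; apply: (Fmax (adjoin_subring hF a^-1)); last 2 first.
- exact: adjoin_sub.
- exact: adjoin_mem.
move=> [q [q0 Fq qt]]; have [k Fkq] := poly_over_adjoinV_denom hF Fa a0 Fq.
apply: TF; exists (a ^+ k *: q); split => //.
- by rewrite scaler_eq0 expf_eq0 (negbTE a0) andbF.
- by rewrite /root hornerZ (rootP qt) mulr0.
Qed.

Lemma maximal_transcendental_algebraic y : algebraic_over (adjoin F t) y.
Proof.
have [Fy|nFy] := pselect (F y).
  exists ('X - y%:P); split; first exact: monic_neq0 (monicXsubC y).
    have hFt := adjoin_subring hF t.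
    apply: (poly_overB hFt); first exact: poly_overX.
    by apply: (poly_overC hFt); apply: adjoin_sub.
  by rewrite root_XsubC.
apply: algebraic_adjoin_swap hF TF _ _; apply: contrapT => Ty.
by apply/nFy/(Fmax (adjoin_subring hF y) Ty); [apply: adjoin_sub | apply: adjoin_mem].
Qed.

End MaximalTranscendental.

Theorem maximal_conch_subring_transcendental (K : fieldType) (F0 : set K) t :
  is_subring F0 -> transcendental_over F0 t ->
  exists V : set K, [/\ maximal_subring V, integrally_closed_in V & conch_subring V].
Proof.
move=> hF0 TF0; have [F [hF TF] Fmax] := exists_maximal_transcendental hF0 TF0.
have t0 : t != 0.
  apply/eqP => t0; apply: TF; exists 'X; split; [by rewrite polyX_eq0 | exact: poly_overX |].
  by rewrite t0 rootX.
apply: (exists_maximal_conch_subring t0 (adjoin_subring hF t) (adjoin_mem hF t)).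
- move=> [g Fg tg]; apply: TF; exists (g * 'X - 1); split.
  + apply/eqP => /(congr1 (fun p : {poly K} => p`_0))/eqP.
    by rewrite coefB coefMX coefC coef0 /= sub0r oppr_eq0 oner_eq0.
  + apply: (poly_overB hF); last exact: poly_overC hF _ (subring1 hF).
    by apply: (poly_overM hF) => //; apply: poly_overX.
  + by rewrite /root hornerD hornerN hornerMX hornerC -tg mulVf // subrr.
- exact: adjoin_unit_decomposable hF (maximal_transcendental_inv hF TF Fmax).
- exact: maximal_transcendental_algebraic.
Qed.

Theorem corollary2p3 (K : fieldType) :
  ~ absolutely_algebraic K ->
  exists V : K -> Prop,
    [/\ maximal_subring V, integrally_closed_in V & conch_subring V].
Proof.
move=> nabs.
have [[t Tt]|] := pselect (exists t : K, transcendental_over (@int_subring K) t).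
  exact: maximal_conch_subring_transcendental (@int_subring_subring K) Tt.
move=> /forallNP/(_ _)/contrapT Kalg; apply: (maximal_conch_subring_pchar0 _ Kalg).
move=> p; apply/negbTE/negP => charp; case: nabs.
by exists p; split => //; apply: pcharf_prime charp.
Qed.
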